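(* In the setting of the SigSAS system with $0<\lambda<\min\{1,1/\widetilde M\}$, there exists a linear map $A_{\lambda,l,p}:T^{l+1}(\mathbb R^{p+1})\to T^{l+1}(\mathbb R^{p+1})$ whose matrix in the canonical basis is invertible and has nonnegative entries, such that $U^{\rm SigSAS}_{\lambda,l,p}(\mathbf z)_t=A_{\lambda,l,p}\widehat{\mathbf z}_t$ for all $\mathbf z\in K_M$ and $t\in\mathbb Z_-$.
   Context: $M>0$, $l,p\in\mathbb N$, $\widetilde M=\sum_{j=0}^pM^j$, $K_M=[-M,M]^{\mathbb Z_-}$. $T^{l+1}(\mathbb R^{p+1})=(\mathbb R^{p+1})^{\otimes(l+1)}$ with canonical basis $\mathbf e_{i_1}\otimes\cdots\otimes\mathbf e_{i_{l+1}}$ and Euclidean norm of coefficients. $\pi_l:T^{l+1}(\mathbb R^{p+1})\to T^{l}(\mathbb R^{p+1})$ is the linear map $\pi_l(\sum a_{i_1\dots i_{l+1}}\mathbf e_{i_1}\otimes\cdots\otimes\mathbf e_{i_{l+1}})=\sum a_{1,i_2\dots i_{l+1}}\mathbf e_{i_2}\otimes\cdots\otimes\mathbf e_{i_{l+1}}$. For $z\in\mathbb R$, $\widetilde{\mathbf z}=\sum_{i=1}^{p+1}z^{i-1}\mathbf e_i$; for a sequence, $\widetilde{\mathbf z}_t$ corresponds to $z_t$ and $\widehat{\mathbf z}_t=\widetilde{\mathbf z}_{t-l}\otimes\cdots\otimes\widetilde{\mathbf z}_t$. Fix $I_0\subset\{1,\dots,p+1\}$ with $1\in I_0$, $|I_0|>1$,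 and $\widehat{\mathbf z}^0=\sum_{i\in I_0}z^{i-1}\mathbf e_1^{\otimes l}\otimes\mathbf e_i$. $U^{\rm SigSAS}_{\lambda,l,p}$ is the unique (echo state) solution filter of $\mathbf x_t=\lambda\pi_l(\mathbf x_{t-1})\otimes\widetilde{\mathbf z}_t+\widehat{\mathbf z}^0_t$ with uniformly bounded states. *)

From HB Require Import structures.
From mathcomp Require Import all_boot all_order all_algebra.
From mathcomp Require Import reals.
From Stdlib Require Import ClassicalEpsilon.
Set Implicit Arguments. Unset Strict Implicit. Unset Printing Implicit Defensive.
Import Order.TTheory GRing.Theory Num.Theory.
Local Open Scope ring_scope.

(* Canonical basis index of T^n(R^{p+1}): tuples (i_1,...,i_n), each i_k in
   {0,...,p} (0-based: ordinal i stands for basis vector e_{i+1}). *)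
Definition tidx (n p : nat) := {ffun 'I_n -> 'I_p.+1}.

(* An element of T^n(R^{p+1}) = its coefficient family in the canonical basis. *)
Definition tensor (R : realType) (n p : nat) := tidx n p -> R.

Definition tnorm (R : realType) n p (x : tensor R n p) : R :=
  Num.sqrt (\sum_(i : tidx n p) x i ^+ 2).

(* pi_l : T^{l+1} -> T^l, keeps coefficients with first index equal to 1
   (ordinal 0) and drops the first slot. *)
Definition tpi (R : realType) l p (x : tensor R l.+1 p) : tensor R l p :=
  fun j => x [ffun k : 'I_l.+1 =>
                match unlift ord0 k with Some k' => j k' | None => ord0 end].

(* Tensor product x (x) v of x in T^l with v in R^{p+1}, landing in T^{l+1};
   the factor v occupies the last slot. *)
Definition tprodv (R : realType) l p (x : tensor R l p) (v : 'I_p.+1 -> R)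
  : tensor R l.+1 p :=
  fun i => x [ffun j : 'I_l => i (widen_ord (leqnSn l) j)] * v (i ord_max).

(* tilde z = sum_{i=1}^{p+1} z^{i-1} e_i *)
Definition ztilde (R : realType) p (z : R) : 'I_p.+1 -> R := fun i => z ^+ i.

(* Time convention: t in Z_- is encoded by k : nat with t = -k, so a
   sequence z in R^{Z_-} is z : nat -> R with (z k) = z_{-k}. *)

(* hat z_t = tilde z_{t-l} (x) ... (x) tilde z_t ; slot m (0-based) carries
   z_{t-l+m}, i.e. z (k + l - m) when t = -k. *)
Definition zhat (R : realType) l p (z : nat -> R) (k : nat) : tensor R l.+1 p :=
  fun i => \prod_(m < l.+1) (z (k + l - m)%N) ^+ (i m).

(* hat z^0 = sum_{i in I0} z^{i-1} e_1^{(x) l} (x) e_i, evaluated at z_t. *)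
Definition zhat0 (R : realType) l p (I0 : {set 'I_p.+1}) (z : nat -> R) (k : nat)
  : tensor R l.+1 p :=
  fun i => if [forall m : 'I_l, i (widen_ord (leqnSn l) m) == ord0]
              && (i ord_max \in I0)
           then z k ^+ (i ord_max) else 0.

Definition sigsas_bounded_solution (R : realType) (lam : R) l p
  (I0 : {set 'I_p.+1}) (z : nat -> R) (x : nat -> tensor R l.+1 p) : Prop :=
  (forall k i, x k i = lam * tprodv (tpi (x k.+1)) (@ztilde R p (z k)) i
                       + @zhat0 R l p I0 z k i)
  /\ exists C : R, forall k, tnorm (x k) <= C.

Definition U_sigsas (R : realType) (lam : R) l p (I0 : {set 'I_p.+1})
  (z : nat -> R) : nat -> tensor R l.+1 p :=
  epsilon (inhabits (fun _ _ => 0)) (@sigsas_bounded_solution R lam l p I0 z).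

From HB Require Import structures.
From mathcomp Require Import all_boot all_order all_algebra.
From mathcomp Require Import reals.
From mathcomp Require Import ring lra zify.
From Stdlib Require Import ClassicalEpsilon.
Set Implicit Arguments. Unset Strict Implicit. Unset Printing Implicit Defensive.
Import Order.TTheory GRing.Theory Num.Theory.
Local Open Scope ring_scope.

(* The SigSAS filter is a diagonal linear map of the signature features.

   On canonical coordinates, x |-> pi_l(x) (x) tilde z only moves coefficients:
   the coefficient of a multi-index i = (i_0,...,i_l) is the coefficient of
   [idx_shift i] = (0, i_0, ..., i_(l-1)) times z^(i_l).  Since hat z_t also
   factors as hat z_(t-1) at [idx_shift i] times z_t^(i_l), the ansatz
   x_t(i) = c(i) hat z_t(i) solves the recursion as soon as
   c(i) = lam c(idx_shift i) + [i in support of hat z^0].  Iterating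
   idx_shift l+1 times reaches the fixed point idx0 = (0,...,0), which yields
   an explicit positive solution [coef] of this scalar recursion. *)

Section IndexShift.
Variables (l p : nat).

(* The multi-index (0, i_0, ..., i_(l-1)): [pi_l] drops a leading 0 and
   [tprodv] appends the last slot, so this is how they act on indices. *)
Definition idx_shift (i : tidx l.+1 p) : tidx l.+1 p :=
  [ffun k : 'I_l.+1 => match unlift ord0 k with
      Some k' => ([ffun j : 'I_l => i (widen_ord (leqnSn l) j)]) k'
    | None => ord0 end].

Definition idx0 : tidx l.+1 p := [ffun _ => ord0].

Definition in_hat0 (I0 : {set 'I_p.+1}) (i : tidx l.+1 p) : bool :=
  [forall m : 'I_l, i (widen_ord (leqnSn l) m) == ord0] && (i ord_max \in I0).

Lemma tprodv_tpiE (R : realType) (y : tensor R l.+1 p) v i :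
  tprodv (tpi y) v i = y (idx_shift i) * v (i ord_max).
Proof. by []. Qed.

Lemma idx_shift_first i : idx_shift i ord0 = ord0.
Proof. by rewrite ffunE unlift_none. Qed.

Lemma idx_shift_lift i (m : 'I_l) :
  idx_shift i (lift ord0 m) = i (widen_ord (leqnSn l) m).
Proof. by rewrite ffunE liftK ffunE. Qed.

Lemma iter_idx_shift_lt n i (m : 'I_l.+1) : (m < n)%N -> iter n idx_shift i m = ord0.
Proof.
elim: n i m => [//|n IH] i m; rewrite iterS.
case: (unliftP ord0 m) => [m'|] -> Hm; last by rewrite idx_shift_first.
by rewrite idx_shift_lift IH //=; move: Hm; rewrite /= /bump /=; lia.
Qed.

Lemma iter_idx_shift_full i : iter l.+1 idx_shift i = idx0.
Proof. by apply/ffunP => m; rewrite iter_idx_shift_lt // ffunE. Qed.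

Lemma idx_shift0 : idx_shift idx0 = idx0.
Proof.
apply/ffunP => m; case: (unliftP ord0 m) => [m'|] ->.
  by rewrite idx_shift_lift !ffunE.
by rewrite idx_shift_first ffunE.
Qed.

Lemma in_hat0_idx0 (I0 : {set 'I_p.+1}) : ord0 \in I0 -> in_hat0 I0 idx0.
Proof.
by move=> H; rewrite /in_hat0 ffunE H andbT; apply/forallP => m; rewrite ffunE.
Qed.

Lemma zhat_shift (R : realType) (z : nat -> R) k i :
  zhat z k.+1 (idx_shift i) * z k ^+ (i ord_max) = zhat z k i.
Proof.
rewrite /zhat big_ord_recl big_ord_recr /= idx_shift_first expr0 mul1r addnK.
congr (_ * _); apply: eq_bigr => m _.
by rewrite idx_shift_lift /bump /=; congr (z _ ^+ _); lia.
Qed.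

Lemma zhat0E (R : realType) (I0 : {set 'I_p.+1}) (z : nat -> R) k i :
  zhat0 I0 z k i = (in_hat0 I0 i)%:R * zhat z k i.
Proof.
rewrite /zhat0 /in_hat0; case: ifP => [/andP[/forallP H _]|_]; last by rewrite mul0r.
rewrite mul1r /zhat big_ord_recr /= addnK big1 ?mul1r // => m _.
by rewrite (eqP (H m)) expr0.
Qed.

End IndexShift.
Arguments idx_shift {l p}.
Arguments idx0 {l p}.
Arguments in_hat0 {l p}.

Section DiagonalSolution.
Variables (R : realType) (l p : nat) (I0 : {set 'I_p.+1}) (lam : R).
Hypotheses (HI0 : ord0 \in I0) (lam_gt0 : 0 < lam) (lam_lt1 : lam < 1).

(* c(i) = sum_(s<=l) lam^s [idx_shift^s i in supp hat z^0] + lam^(l+1)/(1-lam);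
   the tail term is the geometric sum over the fixed point idx0. *)
Definition coef (i : tidx l.+1 p) : R :=
  \sum_(s < l.+1) lam ^+ s * (in_hat0 I0 (iter s idx_shift i))%:R
  + lam ^+ l.+1 / (1 - lam).

(* The scalar recursion that makes the diagonal ansatz a solution. *)
Lemma coef_rec i : coef i = lam * coef (idx_shift i) + (in_hat0 I0 i)%:R.
Proof.
rewrite /coef mulrDr big_distrr /= [in LHS]big_ord_recl [in RHS]big_ord_recr /=.
rewrite -iterSr iter_idx_shift_full in_hat0_idx0 // expr0 mul1r.
have -> : \sum_(s < l) lam * (lam ^+ widen_ord (leqnSn l) s *
            (in_hat0 I0 (iter (widen_ord (leqnSn l) s) idx_shift (idx_shift i)))%:R)
   = \sum_(s < l) lam ^+ bump 0 s * (in_hat0 I0 (iter (bump 0 s) idx_shift i))%:R.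
  by apply: eq_bigr => s _; rewrite /bump /= add1n -iterSr exprS mulrA.
have lam_neq1 : 1 - lam != 0 by rewrite subr_eq0 eq_sym lt_eqF.
rewrite !exprS mulr1; set S := \sum_(_ < _) _.
by move: (in_hat0 I0 i)%:R S (lam ^+ l) => a S L; field.
Qed.

(* Positivity: the matrix diag(coef) is invertible with nonnegative entries. *)
Lemma coef_gt0 i : 0 < coef i.
Proof.
apply: ltr_wpDl; last by rewrite divr_gt0 ?exprn_gt0 // subr_gt0.
by apply: sumr_ge0 => s _; rewrite mulr_ge0 ?exprn_ge0 ?ler0n // ltW.
Qed.

Definition diag_state (z : nat -> R) : nat -> tensor R l.+1 p :=
  fun k i => coef i * zhat z k i.

Lemma diag_state_rec z k i :
  diag_state z k i = lam * tprodv (tpi (diag_state z k.+1)) (@ztilde R p (z k)) i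
                     + zhat0 I0 z k i.
Proof.
rewrite tprodv_tpiE zhat0E /diag_state /ztilde -mulrA zhat_shift mulrA -mulrDl.
by rewrite -coef_rec.
Qed.

(* On inputs bounded by M every coefficient of hat z_t is bounded by the
   corresponding monomial in M, hence so is the state. *)
Lemma diag_state_bounded (M : R) z : (forall k, `|z k| <= M) ->
  exists C : R, forall k, tnorm (diag_state z k) <= C.
Proof.
move=> Hz; have M_ge0 : 0 <= M := le_trans (normr_ge0 _) (Hz 0%N).
exists (Num.sqrt (\sum_i (coef i * \prod_(m < l.+1) M ^+ (i m)) ^+ 2)).
move=> k; apply: ler_wsqrtr; apply: ler_sum => i _.
rewrite -(real_normK (num_real (diag_state _ _ _))) -(real_normK (num_real (_ * _))).
apply: lerXn2r; rewrite ?nnegrE ?normr_ge0 //; apply: le_trans (ler_norm _).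
rewrite /diag_state normrM ger0_norm ?(ltW (coef_gt0 i)) //.
rewrite ler_wpM2l ?(ltW (coef_gt0 i)) // /zhat normr_prod; apply: ler_prod => m _.
by rewrite normrX exprn_ge0 ?normr_ge0 //= lerXn2r ?nnegrE ?normr_ge0.
Qed.

Lemma diag_state_solution (M : R) z : (forall k, `|z k| <= M) ->
  sigsas_bounded_solution lam I0 z (diag_state z).
Proof. by move=> Hz; split; [exact: diag_state_rec | exact: diag_state_bounded Hz]. Qed.

End DiagonalSolution.

Lemma entry_le_tnorm (R : realType) n p (x : tensor R n p) i : `|x i| <= tnorm x.
Proof.
rewrite /tnorm -sqrtr_sqr; apply: ler_wsqrtr.
by rewrite (bigD1 i) //= lerDl; apply: sumr_ge0 => j _; exact: sqr_ge0.
Qed.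

(* Bernoulli's inequality, used to beat the geometric factor lam^n. *)
Lemma bernoulli_ineq (R : realFieldType) (h : R) n :
  0 <= h -> 1 + n%:R * h <= (1 + h) ^+ n.
Proof.
move=> h0; elim: n => [|n IH]; first by rewrite mul0r addr0 expr0.
rewrite exprS -natr1.
have nh0 : 0 <= n%:R * h by rewrite mulr_ge0.
have : (1 + n%:R * h) * (1 + h) <= (1 + h) * (1 + h) ^+ n.
  by rewrite mulrC ler_wpM2l // addr_ge0.
by apply: le_trans; nra.
Qed.

Lemma geometric_decay (R : archiRealFieldType) (lam a B : R) : 0 < lam -> lam < 1 ->
  (forall n, `|a| <= lam ^+ n * B) -> a = 0.
Proof.
move=> lam_gt0 lam_lt1 Ha; apply/normr0_eq0/eqP; rewrite eq_le normr_ge0 andbT.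
rewrite leNgt; apply/negP => a_gt0.
set h := lam^-1 - 1.
have h_gt0 : 0 < h by rewrite /h subr_gt0 invf_gt1.
have B_ge0 : 0 <= B by have := Ha 0%N; rewrite expr0 mul1r; apply: le_trans.
have x_ge0 : 0 <= B / (`|a| * h) by rewrite divr_ge0 // mulr_ge0 // ltW.
have := archi_boundP x_ge0; set n := Num.bound _ => n_gt.
have aXn_le : `|a| * lam^-1 ^+ n <= B.
  rewrite -(ler_pM2l (exprn_gt0 n lam_gt0)) mulrA mulrAC -exprMn mulfV ?gt_eqF //.
  by rewrite expr1n mul1r.
have bern : 1 + n%:R * h <= lam^-1 ^+ n.
  by have := @bernoulli_ineq _ h n (ltW h_gt0); rewrite [1 + h]addrC subrK.
have : `|a| * (1 + n%:R * h) <= B by apply: le_trans aXn_le; rewrite ler_wpM2l.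
have : B < n%:R * (`|a| * h) by move: n_gt; rewrite ltr_pdivrMr ?mulr_gt0.
by move: (n%:R) => N; nra.
Qed.

Section Uniqueness.
Variables (R : realType) (l p : nat) (I0 : {set 'I_p.+1}) (lam : R).
Hypotheses (lam_gt0 : 0 < lam) (lam_lt1 : lam < 1).

(* The difference d of two solutions satisfies the homogeneous recursion
   d_t(i) = lam d_(t-1)(idx_shift i) z_t^(i_l).  At the fixed point idx0 this
   reads d_t(idx0) = lam d_(t-1)(idx0), so boundedness forces d(idx0) = 0; an
   index whose first l+1-n slots vanish reaches idx0 after n shifts. *)
Lemma bounded_solution_unique z (x y : nat -> tensor R l.+1 p) :
  sigsas_bounded_solution lam I0 z x -> sigsas_bounded_solution lam I0 z y ->
  forall k i, x k i = y k i.
Proof.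
move=> [Hx [Cx Bx]] [Hy [Cy By]].
pose d k i := x k i - y k i.
have d_rec k i : d k i = lam * d k.+1 (idx_shift i) * z k ^+ (i ord_max).
  by rewrite /d Hx Hy !tprodv_tpiE /ztilde; ring.
have d0_iter n k : d k idx0 = lam ^+ n * d (k + n)%N idx0.
  elim: n k => [|n IH] k; first by rewrite expr0 mul1r addn0.
  by rewrite IH d_rec idx_shift0 ffunE expr0 mulr1 exprS addnS; ring.
have d0 k : d k idx0 = 0.
  apply: (geometric_decay (B := Cx + Cy) lam_gt0 lam_lt1) => n.
  have lamXn_ge0 : 0 <= lam ^+ n by rewrite exprn_ge0 // ltW.
  rewrite (d0_iter n) normrM ger0_norm // ler_wpM2l //.
  rewrite /d (le_trans (ler_normB _ _)) // lerD //.
    exact: le_trans (entry_le_tnorm _ _) (Bx _).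
  exact: le_trans (entry_le_tnorm _ _) (By _).
have d_lead0 n k (i : tidx l.+1 p) :
    (forall m : 'I_l.+1, (m + n <= l)%N -> i m = ord0) -> d k i = 0.
  elim: n k i => [|n IH] k i Hi.
    have -> : i = idx0 by apply/ffunP => m; rewrite ffunE Hi // addn0 -ltnS.
    exact: d0.
  rewrite d_rec (IH k.+1) ?mulr0 ?mul0r // => m Hm.
  case: (unliftP ord0 m) Hm => [m'|] -> Hm; last by rewrite idx_shift_first.
  by rewrite idx_shift_lift Hi //=; move: Hm; rewrite /= /bump /=; lia.
move=> k i; apply/eqP; rewrite -subr_eq0; apply/eqP.
by apply: (d_lead0 l.+1) => m; lia.
Qed.

End Uniqueness.

Lemma U_sigsasE (R : realType) (M lam : R) (l p : nat) (I0 : {set 'I_p.+1})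
    (z : nat -> R) :
  ord0 \in I0 -> 0 < lam -> lam < 1 -> (forall k, `|z k| <= M) ->
  forall k (i : tidx l.+1 p), U_sigsas lam I0 z k i = coef I0 lam i * zhat z k i.
Proof.
move=> HI0 lam_gt0 lam_lt1 Hz.
have Hsol := diag_state_solution l HI0 lam_gt0 lam_lt1 Hz.
have HU := epsilon_spec (inhabits (fun _ _ => 0)) _ (ex_intro _ _ Hsol).
move=> k i; exact: (bounded_solution_unique lam_gt0 lam_lt1 HU Hsol k i).
Qed.

Theorem mainTheorem3 (R : realType) (M lam : R) (l p : nat)
  (I0 : {set 'I_p.+1}) :
  0 < M ->
  ord0 \in I0 -> (1 < #|I0|)%N ->
  0 < lam -> lam < 1 -> lam < (\sum_(j < p.+1) M ^+ j)^-1 ->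
  exists A : 'M[R]_#|tidx l.+1 p|,
    A \in unitmx /\
    (forall a b, 0 <= A a b) /\
    (forall z : nat -> R, (forall k, `|z k| <= M) ->
       forall (k : nat) (i : tidx l.+1 p),
         @U_sigsas R lam l p I0 z k i
         = \sum_(j : tidx l.+1 p) A (enum_rank i) (enum_rank j) * @zhat R l p z k j).
Proof.
move=> _ HI0 _ lam_gt0 lam_lt1 _.
have c_gt0 := coef_gt0 I0 lam_gt0 lam_lt1.
exists (diag_mx (\row_a coef I0 lam (enum_val a))); split; [|split].
- rewrite unitmxE det_diag unitfE; apply/prodf_neq0 => a _.
  by rewrite mxE gt_eqF.
- by move=> a b; rewrite !mxE mulrn_wge0 // ltW.
move=> z Hz k i; rewrite (U_sigsasE HI0 lam_gt0 lam_lt1 Hz).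
rewrite (bigD1 i) //= !mxE eqxx mulr1n enum_rankK big1 ?addr0 // => j Hj.
by rewrite !mxE (inj_eq enum_rank_inj) eq_sym (negbTE Hj) mulr0n mul0r.
Qed.
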